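(* Let $n\ge 1$. Any two maximal Diophantine graphs of order $n$, $(G_1,f_1)$ and $(G_2,f_2)$ with Diophantine labelings $f_1,f_2$, are labeling isomorphic: there is a graph isomorphism $\varphi:V(G_1)\to V(G_2)$ with $f_1=f_2\circ\varphi$.
   Context: A graph $G$ with $n$ vertices is Diophantine if there is a bijection $f:V(G)\to\{1,2,\dots,n\}$ (a Diophantine labeling) such that $\gcd(f(u),f(v))$ divides $n$ for every edge $uv$. A maximal Diophantine graph of order $n$ is a Diophantine graph with $n$ vertices such that adding any new edge yields a graph that is not Diophantine. *)

From mathcomp Require Import all_boot.
Set Implicit Arguments. Unset Strict Implicit. Unset Printing Implicit Defensive.

Definition simple_graph (V : finType) (e : rel V) : Prop :=
  symmetric e /\ irreflexive e.

Definition label_bij (n : nat) (V : finType) (f : V -> nat) : Prop :=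
  [/\ forall v, 1 <= f v <= n,
      injective f &
      forall k, 1 <= k <= n -> exists v, f v = k].

Definition diophantine_labeling (n : nat) (V : finType) (e : rel V) (f : V -> nat) : Prop :=
  label_bij n f /\ forall u v, e u v -> gcdn (f u) (f v) %| n.

Definition diophantine (V : finType) (e : rel V) : Prop :=
  exists f : V -> nat, diophantine_labeling #|V| e f.

Definition add_edge (V : finType) (e : rel V) (u v : V) : rel V :=
  fun x y => [|| e x y, (x == u) && (y == v) | (x == v) && (y == u)].

Definition maximal_diophantine (n : nat) (V : finType) (e : rel V) : Prop :=
  [/\ simple_graph e, #|V| = n, diophantine e &
      forall u v : V, u != v -> ~~ e u v -> ~ diophantine (add_edge e u v)].

From mathcomp Require Import all_boot.
Set Implicit Arguments. Unset Strict Implicit. Unset Printing Implicit Defensive.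

(* In a maximal Diophantine graph with Diophantine labeling f, every pair of
   distinct vertices whose labels have gcd dividing n must already be adjacent,
   since otherwise f would still label the graph with that edge added. Hence the
   edge relation is determined by f alone, and two such graphs whose labelings
   take the same values are isomorphic via the matching of equal labels. *)

Lemma add_edge_diophantine_labeling n (V : finType) (e : rel V) (f : V -> nat)
    (u v : V) :
  diophantine_labeling n e f -> gcdn (f u) (f v) %| n ->
  diophantine_labeling n (add_edge e u v) f.
Proof.
move=> [fbij fdiv] duv; split=> // a b /or3P[/fdiv //|/andP[/eqP-> /eqP->] //|].
by case/andP=> /eqP-> /eqP->; rewrite gcdnC.
Qed.

Lemma maximal_diophantine_edgeE n (V : finType) (e : rel V) (f : V -> nat) :
  maximal_diophantine n e -> diophantine_labeling n e f ->
  forall x y, e x y = (x != y) && (gcdn (f x) (f y) %| n).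
Proof.
move=> [[_ e_irr] cardV _ e_max] f_lab x y.
case exy: (e x y).
  have neq_xy : x != y by apply: contraTneq exy => ->; rewrite e_irr.
  by rewrite neq_xy f_lab.2.
case: eqVneq => //= neq_xy; apply/esym/negbTE/negP => dxy.
apply: (e_max x y neq_xy); first by rewrite exy.
by exists f; rewrite cardV; apply: add_edge_diophantine_labeling.
Qed.

Lemma label_bij_match n (V1 V2 : finType) (f1 : V1 -> nat) (f2 : V2 -> nat) :
  label_bij n f1 -> label_bij n f2 -> {phi : V1 -> V2 | forall x, f2 (phi x) = f1 x}.
Proof.
move=> [f1_rng _ _] [_ _ f2_onto].
have f2_hit x : exists v, f2 v == f1 x.
  by have [v <-] := f2_onto _ (f1_rng x); exists v.
by exists (fun x => xchoose (f2_hit x)) => x; apply/eqP/(xchooseP (f2_hit x)).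
Qed.

Lemma label_bij_transport n (V1 V2 : finType) (f1 : V1 -> nat) (f2 : V2 -> nat) :
  label_bij n f1 -> label_bij n f2 ->
  exists2 phi : V1 -> V2, bijective phi & forall x, f2 (phi x) = f1 x.
Proof.
move=> f1_bij f2_bij.
have [phi phiK] := label_bij_match f1_bij f2_bij.
have [psi psiK] := label_bij_match f2_bij f1_bij.
case: f1_bij f2_bij => [_ f1_inj _] [_ f2_inj _].
exists phi => //; exists psi => [x|y].
  by apply: f1_inj; rewrite psiK phiK.
by apply: f2_inj; rewrite phiK psiK.
Qed.

Theorem mainTheorem2 (n : nat) (V1 V2 : finType) (e1 : rel V1) (e2 : rel V2)
    (f1 : V1 -> nat) (f2 : V2 -> nat) :
  1 <= n ->
  maximal_diophantine n e1 -> diophantine_labeling n e1 f1 ->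
  maximal_diophantine n e2 -> diophantine_labeling n e2 f2 ->
  exists phi : V1 -> V2,
    [/\ bijective phi,
        forall x y : V1, e2 (phi x) (phi y) = e1 x y &
        forall x : V1, f1 x = f2 (phi x)].
Proof.
move=> _ e1_max f1_lab e2_max f2_lab.
have [phi phi_bij phiK] := label_bij_transport f1_lab.1 f2_lab.1.
exists phi; split=> // x y.
rewrite (maximal_diophantine_edgeE e1_max f1_lab).
rewrite (maximal_diophantine_edgeE e2_max f2_lab) !phiK.
by rewrite (inj_eq (bij_inj phi_bij)).
Qed.
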